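(* Let $k\ge2$, $\sigma_i=\frac{i(k-i)}2$, and let $\boldsymbol\xi(\tau)=(\xi_1,\dots,\xi_k)(\tau)$, $\tau\in[0,\tau_\infty)$, be a solution of the system $\dot\xi_i=b_i-b_{i+1}$ ($i=1,\dots,k$), where $b_1=b_{k+1}=0$ and $b_i=\sigma_{i-1}(e^{-(\xi_i-\xi_{i-1})}-1)$ for $i=2,\dots,k$, with $\sum_{i=1}^k\xi_i(0)=0$ and $\boldsymbol\xi(\tau)\ne0$ for all $\tau\in[0,\tau_\infty)$. Let $B(\tau)=\max_{1\le i\le k+1}b_i(\tau)$ and $J(\tau)=\{i\in\{1,\dots,k+1\}: b_i(\tau)=B(\tau)\}$. Then for every $\tau_0\in[0,\tau_\infty)$ there exists $\varepsilon>0$ such that for all $i\in J(\tau_0)\cap\{2,\dots,k\}$ and all $t\in(\tau_0,\tau_0+\varepsilon)$, $b_i(t)<B(\tau_0)$. *)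

From Stdlib Require Import Reals Lra Lia.
From Coquelicot Require Import Coquelicot.
Open Scope R_scope.

Definition sigma (k i : nat) : R := INR i * (INR k - INR i) / 2.

Definition bcoef (k : nat) (xi : nat -> R -> R) (i : nat) (t : R) : R :=
  if Nat.eqb i 1 then 0
  else if Nat.eqb i (S k) then 0
  else sigma k (i - 1) * (exp (- (xi i t - xi (i - 1)%nat t)) - 1).

(* maxf f n = max (f 1, f 2, ..., f (n+1)) *)
Fixpoint maxf (f : nat -> R) (n : nat) : R :=
  match n with
  | O => f 1%nat
  | S m => Rmax (maxf f m) (f (S (S m)))
  end.

Definition Bmax (k : nat) (xi : nat -> R -> R) (t : R) : R :=
  maxf (fun i => bcoef k xi i t) k.

Definition in_dom (tinf : Rbar) (t : R) : Prop := 0 <= t /\ Rbar_lt t tinf.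

(* f has derivative f' at every point of [0, tinf), the derivative being
   taken within the interval (one-sided at the endpoint 0). *)
Definition deriv_on (tinf : Rbar) (f f' : R -> R) : Prop :=
  forall t, in_dom tinf t ->
    filterlim (fun s => (f s - f t) / (s - t))
      (within (fun s => in_dom tinf s /\ s <> t) (locally t))
      (locally (f' t)).

Definition is_solution (k : nat) (tinf : Rbar) (xi : nat -> R -> R) : Prop :=
  forall i, (1 <= i <= k)%nat ->
    deriv_on tinf (xi i) (fun t => bcoef k xi i t - bcoef k xi (S i) t).

(* The b_i obey a discrete heat equation
     b_j' = - c_j (2 b_j - b_(j+1) - b_(j-1)),   c_j = sigma_(j-1) e^(-(xi_j - xi_(j-1))) > 0,
   with b_1 = b_(k+1) = 0, so they satisfy a maximum principle: after tau0 no b_j exceeds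
   B = B(tau0), and if some interior b_i(t) reaches B at t > tau0, then b_i has a left
   maximum at t, which forces both neighbours, and then every b_j, to equal B at t.
   Not all b_j(tau0) equal B, however: otherwise B = b_1 = 0, all xi_j(tau0) coincide, and the
   conserved sum of the xi_j makes them vanish. An index m with b_m(tau0) < B keeps
   b_m(t) < B for t close to tau0 by continuity, which rules out b_i(t) = B. *)

From Pilot Require Import Defs.
From Stdlib Require Import Reals Lra Lia Classical.
From Coquelicot Require Import Coquelicot.
Open Scope R_scope.

Definition clamp (a b s : R) : R := Rmax a (Rmin b s).

Lemma clamp_id a b s : a <= s <= b -> clamp a b s = s.
Proof. intros. unfold clamp, Rmax, Rmin. repeat destruct Rle_dec; lra. Qed.

Lemma clamp_in a b s : a <= b -> a <= clamp a b s <= b.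
Proof. intros. unfold clamp, Rmax, Rmin. repeat destruct Rle_dec; lra. Qed.

Lemma clamp_nonexpansive a b s x : Rabs (clamp a b s - clamp a b x) <= Rabs (s - x).
Proof.
  unfold clamp, Rmax, Rmin. repeat destruct Rle_dec; unfold Rabs; repeat destruct Rcase_abs; lra.
Qed.

Lemma in_dom_between tinf a b s :
  in_dom tinf a -> in_dom tinf b -> a <= s <= b -> in_dom tinf s.
Proof.
  intros [Ha _] [_ Hb] Hs. split; [lra|].
  apply Rbar_le_lt_trans with (Finite b); [simpl; lra | exact Hb].
Qed.

Lemma in_dom_right tinf t : in_dom tinf t -> exists T, in_dom tinf T /\ t < T.
Proof.
  intros [Ht Htinf]. destruct tinf as [r| |]; simpl in Htinf; try contradiction.
  - exists ((t + r) / 2). repeat split; simpl; lra.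
  - exists (t + 1). repeat split; simpl; lra.
Qed.

Section DerivOn.

Variables (tinf : Rbar) (f f' : R -> R).
Hypothesis f_deriv : deriv_on tinf f f'.

Lemma deriv_on_slope t : in_dom tinf t -> forall e, 0 < e -> exists d, 0 < d /\
  forall s, in_dom tinf s -> s <> t -> Rabs (s - t) < d ->
    Rabs ((f s - f t) / (s - t) - f' t) < e.
Proof.
  intros Ht e He.
  destruct (f_deriv t Ht (ball (f' t) e) (locally_ball (f' t) (mkposreal e He))) as [d Hd].
  exists d. split; [apply cond_pos|]. intros s Hs Hst Hsd. now apply (Hd s).
Qed.

Lemma deriv_on_continuous t : in_dom tinf t -> forall e, 0 < e -> exists d, 0 < d /\
  forall s, in_dom tinf s -> Rabs (s - t) < d -> Rabs (f s - f t) < e.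
Proof.
  intros Ht e He.
  destruct (deriv_on_slope t Ht 1 Rlt_0_1) as [d [Hd Hslope]].
  set (M := Rabs (f' t) + 1).
  assert (HM : 0 < M) by (pose proof (Rabs_pos (f' t)); unfold M; lra).
  exists (Rmin d (e / M)). split; [apply Rmin_pos; [lra | apply Rdiv_lt_0_compat; lra]|].
  intros s Hs Hsd.
  pose proof (Rmin_l d (e / M)). pose proof (Rmin_r d (e / M)).
  destruct (Req_dec s t) as [->|Hst]; [rewrite Rminus_diag, Rabs_R0; lra|].
  assert (Hq : Rabs ((f s - f t) / (s - t)) <= M).
  { pose proof (Hslope s Hs Hst ltac:(lra)).
    pose proof (Rabs_triang_inv ((f s - f t) / (s - t)) (f' t)). unfold M. lra. }
  replace (f s - f t) with ((f s - f t) / (s - t) * (s - t)) by (field; lra).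
  rewrite Rabs_mult.
  apply Rle_lt_trans with (M * Rabs (s - t)); [apply Rmult_le_compat_r; auto using Rabs_pos|].
  apply Rlt_le_trans with (M * (e / M)); [apply Rmult_lt_compat_l; lra|].
  right. field. lra.
Qed.

Variables a b : R.
Hypotheses (a_dom : in_dom tinf a) (b_dom : in_dom tinf b).

Lemma clamped_continuous x : a <= b -> continuity_pt (fun s => f (clamp a b s)) x.
Proof.
  intros Hab e He.
  assert (Hy : in_dom tinf (clamp a b x)) by (apply (in_dom_between tinf a b); auto using clamp_in).
  destruct (deriv_on_continuous _ Hy e He) as [d [Hd Hcont]].
  exists d. split; [exact Hd|]. intros s [_ Hs]. simpl in *. unfold R_dist in *.
  apply Hcont.
  - apply (in_dom_between tinf a b); auto using clamp_in.
  - eapply Rle_lt_trans; [apply clamp_nonexpansive | exact Hs].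
Qed.

Lemma clamped_derivable t : a < t < b -> derivable_pt_lim (fun s => f (clamp a b s)) t (f' t).
Proof.
  intros Ht e He.
  assert (Htd : in_dom tinf t) by (apply (in_dom_between tinf a b); auto; lra).
  destruct (deriv_on_slope t Htd e He) as [d [Hd Hslope]].
  assert (Hp : 0 < Rmin d (Rmin (t - a) (b - t))) by (repeat apply Rmin_pos; lra).
  exists (mkposreal _ Hp). intros h Hh Hhd. simpl in Hhd.
  pose proof (Rmin_l d (Rmin (t - a) (b - t))). pose proof (Rmin_r d (Rmin (t - a) (b - t))).
  pose proof (Rmin_l (t - a) (b - t)). pose proof (Rmin_r (t - a) (b - t)).
  assert (Hh' : - (t - a) < h < b - t) by (apply Rabs_def2 in Hhd; lra).
  rewrite (clamp_id a b (t + h)), (clamp_id a b t) by lra.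
  replace h with (t + h - t) at 2 by ring.
  apply Hslope.
  - apply (in_dom_between tinf a b); auto; lra.
  - lra.
  - replace (t + h - t) with h by ring. lra.
Qed.

End DerivOn.

Lemma derivable_pt_lim_left_slope f t l a eta : a < t ->
  (forall x, a <= x <= t -> f x + eta * (t - x) <= f t) ->
  derivable_pt_lim f t l -> eta <= l.
Proof.
  intros Hat Hleft Hd. apply Rnot_lt_le. intros Hl.
  destruct (Hd (eta - l) ltac:(lra)) as [d Hd'].
  assert (Hp : 0 < Rmin d (t - a)) by (apply Rmin_pos; [apply cond_pos | lra]).
  pose proof (Rmin_l d (t - a)). pose proof (Rmin_r d (t - a)).
  set (h := - Rmin d (t - a) / 2).
  assert (Hh : h < 0) by (unfold h; lra).
  assert (Hq := Hd' h ltac:(lra) ltac:(rewrite Rabs_left; unfold h; lra)).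
  assert (Hdiff : f (t + h) - f t <= eta * h).
  { pose proof (Hleft (t + h) ltac:(unfold h; lra)). lra. }
  assert (Hquot : eta <= (f (t + h) - f t) / h).
  { apply Rmult_le_reg_r with (- h); [lra|].
    replace ((f (t + h) - f t) / h * - h) with (- (f (t + h) - f t)) by (field; lra). lra. }
  apply Rabs_def2 in Hq. lra.
Qed.

Lemma continuity_ab_min_family (P : nat -> R -> R) (m n : nat) a b : a <= b -> (m <= n)%nat ->
  (forall j x, (m <= j <= n)%nat -> a <= x <= b -> continuity_pt (P j) x) ->
  exists j t, (m <= j <= n)%nat /\ a <= t <= b /\
    forall j' s, (m <= j' <= n)%nat -> a <= s <= b -> P j t <= P j' s.
Proof.
  intros Hab Hmn. induction Hmn as [|n Hmn IH]; intros Hc.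
  - destruct (continuity_ab_min (P m) a b Hab) as [t [Hmin Ht]]; [intros; apply Hc; auto; lia|].
    exists m, t. split; [lia|]. split; [exact Ht|].
    intros j' s Hj' Hs. replace j' with m by lia. auto.
  - destruct IH as [j [t [Hj [Ht Hmin]]]]; [intros; apply Hc; auto; lia|].
    destruct (continuity_ab_min (P (S n)) a b Hab) as [u [Hminu Hu]]; [intros; apply Hc; auto; lia|].
    destruct (Rle_or_lt (P j t) (P (S n) u)) as [Hle|Hlt].
    + exists j, t. split; [lia|]. split; [exact Ht|]. intros j' s Hj' Hs.
      destruct (Nat.eq_dec j' (S n)) as [->|Hne].
      * specialize (Hminu s Hs). lra.
      * apply Hmin; auto; lia.
    + exists (S n), u. split; [lia|]. split; [exact Hu|]. intros j' s Hj' Hs.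
      destruct (Nat.eq_dec j' (S n)) as [->|Hne]; auto.
      specialize (Hmin j' s ltac:(lia) Hs). lra.
Qed.

Section DiscreteHeatMaxPrinciple.

Variables (k : nat) (b : nat -> R -> R) (lo hi B : R).
Hypothesis b_first : forall s, b 1%nat s = 0.
Hypothesis b_last : forall s, b (S k) s = 0.
Hypothesis b_cont : forall j x, (2 <= j <= k)%nat -> lo <= x <= hi -> continuity_pt (b j) x.
Hypothesis b_deriv : forall j t, (2 <= j <= k)%nat -> lo < t < hi -> exists c, 0 < c /\
  derivable_pt_lim (b j) t (- c * (2 * b j t - b (S j) t - b (j - 1)%nat t)).
Hypothesis b_init : forall j, (1 <= j <= S k)%nat -> b j lo <= B.

Lemma B_nonneg : 0 <= B.
Proof. rewrite <- (b_first lo). apply b_init. lia. Qed.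

Lemma b_neighbours_le t j M : (2 <= j <= k)%nat -> 0 <= M ->
  (forall j', (2 <= j' <= k)%nat -> b j' t <= M) ->
  b (S j) t <= M /\ b (j - 1)%nat t <= M.
Proof.
  intros Hj HM Hle. split.
  - destruct (Nat.eq_dec j k) as [->|]; [rewrite b_last; lra | apply Hle; lia].
  - destruct (Nat.eq_dec j 2) as [->|]; [simpl; rewrite b_first; lra | apply Hle; lia].
Qed.

(* Minimising B - b_j(x) + eta (x - lo) over all j and x in [lo, s] yields a point where
   b_j' >= eta > 0 although b_j dominates its neighbours, which forces b_j' <= 0. *)
Lemma weak_max_principle s j : lo <= s < hi -> (2 <= j <= k)%nat -> b j s <= B.
Proof.
  intros Hs Hj. apply Rnot_lt_le. intros Hgt.
  assert (Hslo : lo < s).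
  { destruct (Req_dec s lo) as [->|]; [|lra]. specialize (b_init j ltac:(lia)). lra. }
  set (eta := (b j s - B) / (2 * (s - lo))).
  assert (Heta : 0 < eta) by (apply Rdiv_lt_0_compat; lra).
  assert (Heta_s : eta * (s - lo) = (b j s - B) / 2) by (unfold eta; field; lra).
  set (P := fun j' x => B - b j' x + eta * (x - lo)).
  destruct (continuity_ab_min_family P 2 k lo s) as [j0 [t0 [Hj0 [Ht0 Hmin]]]]; [lra | lia | |].
  { intros j' x Hj' Hx. pose proof (b_cont j' x Hj' ltac:(lra)). unfold P. reg. }
  assert (HP0 : P j0 t0 < 0) by (pose proof (Hmin j s Hj ltac:(lra)); unfold P in *; lra).
  assert (Ht0lo : lo < t0).
  { destruct (Req_dec t0 lo) as [Ht0'|]; [|lra].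
    unfold P in HP0. rewrite Ht0' in HP0. pose proof (b_init j0 ltac:(lia)). lra. }
  destruct (b_deriv j0 t0 Hj0 ltac:(lra)) as [c [Hc HD]].
  assert (Hslope : eta <= - c * (2 * b j0 t0 - b (S j0) t0 - b (j0 - 1)%nat t0)).
  { apply (derivable_pt_lim_left_slope (b j0) t0 _ lo eta Ht0lo); [|exact HD].
    intros x Hx. pose proof (Hmin j0 x Hj0 ltac:(lra)). unfold P in *. nra. }
  assert (Htop : B < b j0 t0) by (unfold P in HP0; nra).
  destruct (b_neighbours_le t0 j0 (b j0 t0) Hj0) as [Hup Hdown].
  { pose proof B_nonneg. lra. }
  { intros j' Hj'. pose proof (Hmin j' t0 Hj' Ht0). unfold P in *. lra. }
  nra.
Qed.

Lemma max_propagates t j : lo < t < hi -> (2 <= j <= k)%nat -> b j t = B ->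
  b (S j) t = B /\ b (j - 1)%nat t = B.
Proof.
  intros Ht Hj HjB.
  destruct (b_deriv j t Hj Ht) as [c [Hc HD]].
  assert (Hslope : 0 <= - c * (2 * b j t - b (S j) t - b (j - 1)%nat t)).
  { apply (derivable_pt_lim_left_slope (b j) t _ lo 0 ltac:(lra)); [|exact HD].
    intros x Hx. pose proof (weak_max_principle x j ltac:(lra) Hj). lra. }
  destruct (b_neighbours_le t j B Hj B_nonneg) as [Hup Hdown].
  { intros j' Hj'. apply weak_max_principle; auto; lra. }
  rewrite HjB in Hslope. split; nra.
Qed.

Lemma strong_max_principle t i : lo < t < hi -> (2 <= i <= k)%nat -> b i t = B ->
  forall j, (1 <= j <= S k)%nat -> b j t = B.
Proof.
  intros Ht Hi HiB.
  assert (Hup : forall n, (i + n <= S k)%nat -> b (i + n)%nat t = B).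
  { induction n as [|n IH]; intros Hn; [now rewrite Nat.add_0_r|].
    replace (i + S n)%nat with (S (i + n)) by lia. apply max_propagates; auto; try lia.
    apply IH. lia. }
  assert (Hdown : forall n, (n < i)%nat -> b (i - n)%nat t = B).
  { induction n as [|n IH]; intros Hn; [now rewrite Nat.sub_0_r|].
    replace (i - S n)%nat with (i - n - 1)%nat by lia. apply max_propagates; auto; try lia.
    apply IH. lia. }
  intros j Hj. destruct (Nat.le_gt_cases i j).
  - replace j with (i + (j - i))%nat by lia. apply Hup. lia.
  - replace j with (i - (i - j))%nat by lia. apply Hdown. lia.
Qed.

Lemma strict_max_principle t m : lo < t < hi -> (1 <= m <= S k)%nat -> b m t < B ->
  forall i, (2 <= i <= k)%nat -> b i t < B.
Proof.
  intros Ht Hm HmB i Hi. apply Rnot_le_lt. intros HiB.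
  assert (Heq : b i t = B) by (apply Rle_antisym; auto; apply weak_max_principle; auto; lra).
  pose proof (strong_max_principle t i Ht Hi Heq m Hm). lra.
Qed.

End DiscreteHeatMaxPrinciple.

Lemma sigma_pos k i : (1 <= i < k)%nat -> 0 < Defs.sigma k i.
Proof.
  intros. unfold Defs.sigma. assert (0 < INR i) by (apply lt_0_INR; lia).
  assert (INR i < INR k) by (apply lt_INR; lia). apply Rdiv_lt_0_compat; nra.
Qed.

Lemma bcoef_1 k xi t : bcoef k xi 1 t = 0.
Proof. reflexivity. Qed.

Lemma bcoef_Sk k xi t : (1 <= k)%nat -> bcoef k xi (S k) t = 0.
Proof.
  intros. unfold bcoef. rewrite (proj2 (Nat.eqb_neq (S k) 1)) by lia. now rewrite Nat.eqb_refl.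
Qed.

Lemma bcoef_mid k xi j t : (2 <= j <= k)%nat ->
  bcoef k xi j t = Defs.sigma k (j - 1) * (exp (- (xi j t - xi (j - 1)%nat t)) - 1).
Proof.
  intros. unfold bcoef.
  now rewrite (proj2 (Nat.eqb_neq j 1)), (proj2 (Nat.eqb_neq j (S k))) by lia.
Qed.

Lemma bcoef_mid_eq0 k xi j t : (2 <= j <= k)%nat -> bcoef k xi j t = 0 ->
  xi j t = xi (j - 1)%nat t.
Proof.
  intros Hj H0. rewrite bcoef_mid in H0 by lia.
  pose proof (sigma_pos k (j - 1) ltac:(lia)).
  assert (Hexp : exp (- (xi j t - xi (j - 1)%nat t)) = exp 0).
  { rewrite exp_0. apply Rmult_integral in H0. destruct H0; lra. }
  apply exp_inv in Hexp. lra.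
Qed.

Lemma maxf_ge f n m : (1 <= m <= S n)%nat -> f m <= maxf f n.
Proof.
  induction n as [|n IH]; intros Hm; simpl.
  - replace m with 1%nat by lia. lra.
  - destruct (Nat.eq_dec m (S (S n))) as [->|].
    + apply Rmax_r.
    + eapply Rle_trans; [apply IH; lia | apply Rmax_l].
Qed.

Lemma bcoef_le_Bmax k xi m t : (1 <= m <= S k)%nat -> bcoef k xi m t <= Bmax k xi t.
Proof. apply (maxf_ge (fun i => bcoef k xi i t)). Qed.

Lemma sum_f_R0_telescope (g : nat -> R) n :
  sum_f_R0 (fun j => g (S j) - g (S (S j))) n = g 1%nat - g (S (S n)).
Proof. induction n as [|n IH]; simpl; [ring | rewrite IH; ring]. Qed.

Section Solution.

Variables (k : nat) (tinf : Rbar) (xi : nat -> R -> R).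
Hypotheses (k_ge2 : (2 <= k)%nat) (xi_sol : is_solution k tinf xi).

(* A solution is only known on [0, tinf); clamping it to [a, b] gives functions defined,
   continuous and differentiable in the usual sense on all of R. *)
Definition clamped_bcoef (a b : R) (j : nat) (s : R) : R :=
  bcoef k (fun i s => xi i (clamp a b s)) j s.

Lemma clamped_bcoef_eq a b j t : a <= t <= b -> clamped_bcoef a b j t = bcoef k xi j t.
Proof. intros Ht. unfold clamped_bcoef, bcoef. now rewrite clamp_id. Qed.

Variables a b : R.
Hypotheses (a_dom : in_dom tinf a) (b_dom : in_dom tinf b).

Lemma clamped_bcoef_continuous j x : a <= b -> (1 <= j <= S k)%nat ->
  continuity_pt (clamped_bcoef a b j) x.
Proof.
  intros Hab Hj. unfold clamped_bcoef.
  destruct (Nat.eq_dec j 1) as [->|]; [apply continuity_pt_const; intros ? ?; reflexivity|].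
  destruct (Nat.eq_dec j (S k)) as [->|].
  { apply continuity_pt_ext with (fun _ => 0); [intros; rewrite bcoef_Sk; auto; lia|].
    apply continuity_pt_const. intros ? ?. reflexivity. }
  pose proof (clamped_continuous _ _ _ (xi_sol j ltac:(lia)) a b a_dom b_dom x Hab) as Hf.
  pose proof (clamped_continuous _ _ _ (xi_sol (j - 1)%nat ltac:(lia)) a b a_dom b_dom x Hab) as Hg.
  set (f := fun s => xi j (clamp a b s)) in Hf. set (g := fun s => xi (j - 1)%nat (clamp a b s)) in Hg.
  apply continuity_pt_ext with (fun s => Defs.sigma k (j - 1) * (exp (- (f s - g s)) - 1)).
  { intros s. unfold f, g. now rewrite bcoef_mid by lia. }
  clearbody f g. reg.
Qed.

Lemma clamped_bcoef_derivable j t : a < t < b -> (2 <= j <= k)%nat -> exists c, 0 < c /\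
  derivable_pt_lim (clamped_bcoef a b j) t (- c * (2 * clamped_bcoef a b j t
    - clamped_bcoef a b (S j) t - clamped_bcoef a b (j - 1)%nat t)).
Proof.
  intros Ht Hj.
  exists (Defs.sigma k (j - 1) * exp (- (xi j t - xi (j - 1)%nat t))). split.
  { apply Rmult_lt_0_compat; [apply sigma_pos; lia | apply exp_pos]. }
  rewrite !clamped_bcoef_eq by lra.
  assert (Hf := clamped_derivable _ _ _ (xi_sol j ltac:(lia)) a b a_dom b_dom t Ht).
  assert (Hg := clamped_derivable _ _ _ (xi_sol (j - 1)%nat ltac:(lia)) a b a_dom b_dom t Ht).
  replace (S (j - 1)) with j in Hg by lia.
  set (f := fun s => xi j (clamp a b s)) in Hf. set (g := fun s => xi (j - 1)%nat (clamp a b s)) in Hg.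
  apply derivable_pt_lim_ext with (fun s => Defs.sigma k (j - 1) * (exp (- (f s - g s)) - 1)).
  { intros s. unfold clamped_bcoef, f, g. now rewrite bcoef_mid by lia. }
  replace (xi j t - xi (j - 1)%nat t) with (f t - g t) by (unfold f, g; now rewrite clamp_id by lra).
  clearbody f g. apply is_derive_Reals in Hf, Hg. apply is_derive_Reals.
  auto_derive; [repeat split; eexists; eassumption|].
  change (fun x => f x) with f; change (fun x => g x) with g.
  rewrite (is_derive_unique _ _ _ Hf), (is_derive_unique _ _ _ Hg).
  unfold Rminus. ring.
Qed.

End Solution.

Lemma solution_sum_const k tinf xi t : (1 <= k)%nat -> is_solution k tinf xi -> in_dom tinf t ->
  sum_f_R0 (fun j => xi (S j) t) (k - 1) = sum_f_R0 (fun j => xi (S j) 0) (k - 1).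
Proof.
  intros Hk Hsol Ht.
  assert (H0 : in_dom tinf 0).
  { destruct Ht as [Ht0 Htinf]. split; [lra|].
    apply Rbar_le_lt_trans with (Finite t); [simpl; lra | exact Htinf]. }
  set (g := fun s => sum_f_R0 (fun j => xi (S j) (clamp 0 t s)) (k - 1)).
  destruct (Rle_lt_or_eq_dec 0 t (proj1 Ht)) as [Htpos|<-]; [|reflexivity].
  destruct (MVT_gen g 0 t (fun _ => 0)) as [c [_ Hc]].
  - intros x Hx. rewrite Rmin_left, Rmax_right in Hx by lra.
    (* The derivative of the sum telescopes to b_1 - b_(k+1) = 0. *)
    replace 0 with (sum_n (fun j => bcoef k xi (S j) x - bcoef k xi (S (S j)) x) (k - 1)).
    2: transitivity (sum_f_R0 (fun j => bcoef k xi (S j) x - bcoef k xi (S (S j)) x) (k - 1));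
       [apply sum_n_Reals|].
    + eapply is_derive_ext; [intros s; apply sum_n_Reals|].
      apply (is_derive_sum_n (fun j s => xi (S j) (clamp 0 t s))). intros j Hj.
      apply is_derive_Reals, (clamped_derivable tinf _ _ (Hsol (S j) ltac:(lia))); auto.
    + rewrite (sum_f_R0_telescope (fun j => bcoef k xi j x)).
      replace (S (S (k - 1))) with (S k) by lia. rewrite bcoef_1, bcoef_Sk by lia. apply Rminus_diag.
  - intros x Hx. apply continuity_pt_finite_SF. intros j Hj.
    apply (clamped_continuous tinf _ _ (Hsol (S j) ltac:(lia))); auto; lra.
  - unfold g in Hc. rewrite !clamp_id in Hc by lra. lra.
Qed.

Lemma state_eq0_of_bcoef_eq0 k xi t : (2 <= k)%nat ->
  sum_f_R0 (fun j => xi (S j) t) (k - 1) = 0 ->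
  (forall m, (2 <= m <= k)%nat -> bcoef k xi m t = 0) ->
  forall i, (1 <= i <= k)%nat -> xi i t = 0.
Proof.
  intros Hk Hsum Hb0.
  assert (Hconst : forall n, (n <= k - 1)%nat -> xi (S n) t = xi 1%nat t).
  { induction n as [|n IH]; intros Hn; auto.
    rewrite (bcoef_mid_eq0 k xi (S (S n)) t) by (try apply Hb0; lia).
    replace (S (S n) - 1)%nat with (S n) by lia. apply IH. lia. }
  rewrite (sum_eq _ (fun _ => xi 1%nat t)), sum_cte in Hsum by auto.
  assert (0 < INR (S (k - 1))) by (apply lt_0_INR; lia).
  intros i Hi. replace i with (S (i - 1)) by lia. rewrite Hconst by lia. nra.
Qed.

Lemma exists_bcoef_lt_Bmax k tinf xi t : (2 <= k)%nat -> is_solution k tinf xi ->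
  sum_f_R0 (fun j => xi (S j) 0) (k - 1) = 0 -> in_dom tinf t ->
  (exists i, (1 <= i <= k)%nat /\ xi i t <> 0) ->
  exists m, (1 <= m <= S k)%nat /\ bcoef k xi m t < Bmax k xi t.
Proof.
  intros Hk Hsol Hsum0 Ht [i [Hi Hxi]]. apply NNPP. intros Hnone.
  assert (Hall : forall m, (1 <= m <= S k)%nat -> bcoef k xi m t = Bmax k xi t).
  { intros m Hm. apply Rle_antisym; [now apply bcoef_le_Bmax|].
    apply Rnot_lt_le. intros Hlt. apply Hnone. now exists m. }
  apply Hxi, (state_eq0_of_bcoef_eq0 k xi t); auto.
  - rewrite (solution_sum_const k tinf) by (auto; lia). exact Hsum0.
  - intros m Hm. rewrite Hall, <- (Hall 1%nat) by lia. apply bcoef_1.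
Qed.

Theorem lemma2p2 (k : nat) (tinf : Rbar) (xi : nat -> R -> R) :
  (2 <= k)%nat ->
  is_solution k tinf xi ->
  sum_f_R0 (fun j => xi (S j) 0) (k - 1) = 0 ->
  (forall t, in_dom tinf t -> exists i, (1 <= i <= k)%nat /\ xi i t <> 0) ->
  forall tau0, in_dom tinf tau0 ->
  exists eps, 0 < eps /\
    forall i, (2 <= i <= k)%nat ->
      bcoef k xi i tau0 = Bmax k xi tau0 ->
      forall t, tau0 < t < tau0 + eps ->
        bcoef k xi i t < Bmax k xi tau0.
Proof.
  intros Hk Hsol Hsum Hnz tau0 Hdom.
  set (B := Bmax k xi tau0).
  destruct (in_dom_right tinf tau0 Hdom) as [T [HT HtauT]].
  set (b := clamped_bcoef k xi tau0 T).
  destruct (exists_bcoef_lt_Bmax k tinf xi tau0 Hk Hsol Hsum Hdom (Hnz tau0 Hdom))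
    as [m [Hm HmB]].
  assert (Hb0 : forall j, b j tau0 = bcoef k xi j tau0)
    by (intros; apply clamped_bcoef_eq; lra).
  destruct (clamped_bcoef_continuous k tinf xi Hk Hsol tau0 T Hdom HT m tau0 ltac:(lra) Hm
              (B - bcoef k xi m tau0) ltac:(unfold B; lra)) as [alpha [Halpha Hnear]].
  exists (Rmin alpha (T - tau0)). split; [apply Rmin_pos; lra|].
  intros i Hi _ t Ht.
  pose proof (Rmin_l alpha (T - tau0)). pose proof (Rmin_r alpha (T - tau0)).
  assert (Hmt : b m t < B).
  { specialize (Hnear t). simpl in Hnear. unfold R_dist, D_x, no_cond in Hnear.
    fold b in Hnear. rewrite Hb0 in Hnear.
    assert (Hd : Rabs (b m t - bcoef k xi m tau0) < B - bcoef k xi m tau0).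
    { apply Hnear. split; [split; auto; lra | rewrite Rabs_right; lra]. }
    apply Rabs_def2 in Hd. lra. }
  rewrite <- (clamped_bcoef_eq k xi tau0 T) by lra.
  refine (strict_max_principle k b tau0 T B _ _ _ _ _ t m _ Hm Hmt i Hi).
  - intros s. apply bcoef_1.
  - intros s. apply bcoef_Sk. lia.
  - intros j x Hj _. apply (clamped_bcoef_continuous k tinf); auto; lra || lia.
  - intros j s Hj Hs. apply (clamped_bcoef_derivable k tinf); auto.
  - intros j Hj. rewrite Hb0. now apply bcoef_le_Bmax.
  - lra.
Qed.
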